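(* There exists $N$ such that for all positive integers $a,b\ge N$ we have $r(a,b)\le \frac{9}{8}$. More precisely, for all such $a,b$, the quotient $$\frac{\phi(c!)}{\phi(a!)\,\phi(b!)},\qquad c=a+b+\left\lfloor\frac{a+b}{8}\right\rfloor,$$ is an integer.
   Context: $\phi$ denotes Euler's totient function. For positive integers $a,b$, $c(a,b)$ is the least positive integer $c$ such that $\phi(a!)\,\phi(b!)$ divides $\phi(c!)$, and $r(a,b)=c(a,b)/(a+b)$. *)

From mathcomp Require Import all_boot.

(* Write v_q for the q-adic valuation and c = a + b + L with L = (a + b)/8 >= a/4
   (assuming a <= b).  By the product formula for phi, v_q(phi(n!)) is the sum of
   v_q(p - 1) over the primes p <= n, plus v_q(n!) - 1 when q <= n.  The first
   part is monotone in n, and a! b! L! divides c!, so it suffices to show that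
   sum_(p <= a) v_q(p - 1) <= v_q(floor(a/4)!) + 1.  The left side counts, for each
   k >= 1, the primes p <= a with p = 1 mod q^k.  For q <= 7 this is bounded by
   Chebyshev's estimate pi(a) <= 2^801 + 3a/800.  For q > 7 such p are of the
   form 1 + j q^k with 1 + j q^k coprime to 210, and for every fixed residue of
   q^k only 48 of any 210 consecutive j qualify, a density below 1/4. *)

From mathcomp Require Import all_boot zify.

Lemma sum_nat_bool_count (T : Type) (s : seq T) (P B : pred T) :
  \sum_(i <- s | P i) (B i : nat) = count (fun i => P i && B i) s.
Proof.
by elim: s => [|x s IH]; rewrite ?big_nil ?big_cons //= IH; case: (P x); case: (B x).
Qed.

Lemma leq_sum_iota1 (F : nat -> nat) a : 0 < a -> F 1 <= \sum_(k <- iota 1 a) F k.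
Proof. by case: a => // a _; rewrite big_cons leq_addr. Qed.

Lemma prime_dvd_fact p n : prime p -> (p %| n`!) = (p <= n).
Proof.
move=> p_pr; elim: n => [|n IHn]; first by rewrite dvdn1 leqn0; case: p p_pr => [|[|]].
rewrite factS Euclid_dvdM // IHn.
case: (ltngtP p n.+1) => [p_lt|p_gt|->]; first by rewrite -ltnS p_lt orbT.
- rewrite leqNgt (ltnW p_gt) orbF.
  by apply/negP => /(dvdn_leq (ltn0Sn n)); rewrite leqNgt p_gt.
- by rewrite dvdnn.
Qed.

Lemma fact_dvdn_fact m n : m <= n -> m`! %| n`!.
Proof. by move=> le_mn; rewrite -(bin_fact le_mn) mulnCA dvdn_mulr. Qed.

Lemma fact_mul_dvdn_fact m n : m`! * n`! %| (m + n)`!.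
Proof. by rewrite -(bin_fact (leq_addr n m)) addKn dvdn_mull. Qed.

Lemma big_primes_fact (F : nat -> nat) n :
  \sum_(p <- primes n`!) F p = \sum_(p <- iota 0 n.+1 | prime p) F p.
Proof.
rewrite -[in RHS]big_filter; apply: perm_big; apply: uniq_perm.
- exact: primes_uniq.
- by rewrite filter_uniq // iota_uniq.
move=> p; rewrite mem_primes mem_filter mem_iota fact_gt0 ltnS.
by case p_pr: (prime p) => //=; rewrite prime_dvd_fact.
Qed.

Lemma logn_prod q (s : seq nat) (F : nat -> nat) : {in s, forall i, 0 < F i} ->
  logn q (\prod_(i <- s) F i) = \sum_(i <- s) logn q (F i).
Proof.
elim: s => [|x s IHs] F_gt0; first by rewrite !big_nil logn1.
have F_gt0' : {in s, forall i, 0 < F i} by move=> i s_i; rewrite F_gt0 // inE s_i orbT.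
rewrite !big_cons lognM ?F_gt0 ?mem_head ?IHs //.
by rewrite big_seq prodn_cond_gt0.
Qed.

Lemma dvdn_logn m n : 0 < m -> 0 < n ->
  (forall p, prime p -> logn p m <= logn p n) -> m %| n.
Proof.
move=> m_gt0 n_gt0 le_logn; apply/dvdn_partP => // p.
rewrite mem_primes => /and3P[p_pr _ _].
by rewrite p_part pfactor_dvdn // le_logn.
Qed.

Lemma logn_fact_iota q n a : prime q -> n <= a ->
  logn q n`! = \sum_(k <- iota 1 a) n %/ q ^ k.
Proof.
move=> q_pr le_na; rewrite logn_fact // /index_iota subn1 /=.
rewrite (_ : a = n + (a - n)); last lia.
rewrite iotaD big_cat /= [X in _ + X]big1_seq ?addn0 // => k /andP[_].
rewrite mem_iota => /andP[lt_nk _]; apply: divn_small.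
by apply: leq_trans (ltn_expl _ (prime_gt1 q_pr)); lia.
Qed.

Lemma sum_div_expn_le q z n s : 1 < q -> \sum_(k <- iota s.+1 n) z %/ q ^ k <= z %/ q ^ s.
Proof.
move=> q_gt1; elim: n s => [|n IHn] s; first by rewrite big_nil.
rewrite /= big_cons; apply: leq_trans (leq_add (leqnn _) (IHn s.+1)) _.
have : z %/ q ^ s %/ q <= z %/ q ^ s %/ 2 by apply: leq_div2l.
by rewrite expnSr divnMA; lia.
Qed.

(** * The q-adic valuation of phi(n!) *)

Definition sum_logn_pred_primes q n := \sum_(p <- iota 0 n.+1 | prime p) logn q p.-1.

Lemma logn_totient_fact q n : prime q ->
  logn q (totient n`!) =
  sum_logn_pred_primes q n + (if q <= n then (logn q n`!).-1 else 0).
Proof.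
move=> q_pr; rewrite totientE ?fact_gt0 // logn_prod; last first.
  move=> p; rewrite mem_primes => /and3P[/prime_gt1 p_gt1 _ _].
  by rewrite muln_gt0 expn_gt0 (ltn_trans _ p_gt1) // andbT; lia.
transitivity (\sum_(p <- primes n`!) (logn q p.-1 + (q == p) * (logn q n`!).-1)).
  apply: eq_big_seq => p; rewrite mem_primes => /and3P[p_pr _ _].
  have p_gt1 := prime_gt1 p_pr.
  rewrite lognM; [|lia|by rewrite expn_gt0 prime_gt0].
  by rewrite lognX (logn_prime _ p_pr) mulnC; case: eqP => [->|].
rewrite big_split /= !big_primes_fact; congr (_ + _).
rewrite -big_distrl sum_nat_bool_count (eq_count (a2 := pred1 q)); last first.
  by move=> p /=; rewrite eq_sym andb_idl // => /eqP ->.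
rewrite count_uniq_mem ?iota_uniq // mem_iota add0n ltnS.
by case: (q <= n); rewrite /= ?mul1n.
Qed.

Lemma sum_logn_pred_primes_mono q : {homo sum_logn_pred_primes q : m n / m <= n}.
Proof.
move=> m n le_mn; rewrite /sum_logn_pred_primes (_ : n.+1 = m.+1 + (n - m)); last lia.
by rewrite iotaD big_cat leq_addr.
Qed.

Lemma sum_logn_pred_primes_small q a : prime q -> a < q -> sum_logn_pred_primes q a = 0.
Proof.
move=> q_pr lt_aq; rewrite /sum_logn_pred_primes big1_seq // => p /andP[_].
rewrite mem_iota ltnS => /andP[_ le_pa].
apply/eqP; rewrite -leqn0 leqNgt logn_gt0 mem_primes q_pr /=.
by apply/negP => /andP[p1_gt0 /(dvdn_leq p1_gt0)]; lia.
Qed.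

(** * A Chebyshev bound *)

Definition prime_pi n := count prime (iota 0 n.+1).

Lemma prime_pi_le n : prime_pi n <= n.
Proof. by rewrite /prime_pi /= add0n (leq_trans (count_size _ _)) // size_iota. Qed.

Lemma prime_pi_mono : {homo prime_pi : m n / m <= n}.
Proof.
move=> m n le_mn; rewrite /prime_pi (_ : n.+1 = m.+1 + (n - m)); last lia.
by rewrite iotaD count_cat leq_addr.
Qed.

Lemma bin_le_exp2 n m : 'C(n, m) <= 2 ^ n.
Proof.
elim: n m => [|n IHn] [|m] //; first by rewrite bin0 expn_gt0.
by rewrite binS expnS mul2n -addnn leq_add.
Qed.

Lemma prod_primes_dvd (s : seq nat) x : uniq s ->
  {in s, forall p, prime p -> p %| x} -> \prod_(p <- s | prime p) p %| x.
Proof.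
elim: s => [|y s IHs] /=; first by rewrite big_nil dvd1n.
move=> /andP[s'y s_uniq] dvd_x; rewrite big_cons.
have {}IHs : \prod_(p <- s | prime p) p %| x.
  by apply: IHs => // p s_p; apply: dvd_x; rewrite inE s_p orbT.
case y_pr: (prime y) => //.
have y_coprime : coprime y (\prod_(p <- s | prime p) p).
  rewrite big_seq_cond; apply: (big_ind (coprime y)) => [|u v|p /andP[s_p p_pr]].
  - exact: coprimen1.
  - by rewrite coprimeMr => -> ->.
  - by rewrite prime_coprime // dvdn_prime2 //; apply: contraNneq s'y => ->.
by rewrite Gauss_dvd // dvd_x ?mem_head.
Qed.

Lemma expn_count_le_prod L (s : seq nat) : {in s, forall p, L <= p} ->
  L ^ count prime s <= \prod_(p <- s | prime p) p.
Proof.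
elim: s => [|x s IHs] le_L; first by rewrite big_nil.
have {}IHs := IHs (fun p s_p => le_L p (@mem_behead _ (x :: s) p s_p)).
rewrite big_cons /=; case: (prime x) => //=.
by rewrite add1n expnS leq_mul // le_L ?mem_head.
Qed.

(* The primes in (n + 1, 2n + 1] all divide 'C(2n + 1, n) <= 2^(2n + 1). *)
Lemma count_primes_mid_bound n m : 0 < n -> 2 ^ m <= n.+1 ->
  m * count prime (iota n.+2 n) <= n.*2.+1.
Proof.
move=> n_gt0 le_2m.
have prod_dvd_bin : \prod_(p <- iota n.+2 n | prime p) p %| 'C(n.*2.+1, n).
  apply: prod_primes_dvd; first exact: iota_uniq.
  move=> p; rewrite mem_iota => /andP[p_gt p_lt] p_pr.
  have := @bin_fact n.*2.+1 n; rewrite (_ : n.*2.+1 - n = n.+1); last lia.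
  move=> /(_ ltac:(lia)) fact_eq.
  have : p %| n.*2.+1`! by rewrite prime_dvd_fact //; lia.
  rewrite -fact_eq Gauss_dvdl // prime_coprime // Euclid_dvdM // !prime_dvd_fact //.
  by apply/negP => /orP[]; lia.
have : n.+1 ^ count prime (iota n.+2 n) <= 2 ^ n.*2.+1.
  apply: leq_trans (bin_le_exp2 _ n).
  apply: leq_trans (dvdn_leq _ prod_dvd_bin); last by rewrite bin_gt0; lia.
  by apply: expn_count_le_prod => p; rewrite mem_iota => /andP[/ltnW].
case: (count _ _) => [|t] le_exp; first by rewrite muln0.
rewrite -(leq_exp2l _ _ (ltnSn 1)) expnM.
by apply: leq_trans le_exp; rewrite leq_exp2r.
Qed.

Lemma prime_pi_double n : 0 < n ->
  prime_pi n.*2.+2 = prime_pi n.+1 + count prime (iota n.+2 n).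
Proof.
move=> n_gt0; rewrite /prime_pi (_ : n.*2.+3 = n.+2 + n + 1); last lia.
rewrite !iotaD !count_cat !add0n /= addn0.
suff /negbTE -> : ~~ prime (n.+2 + n) by rewrite addn0.
rewrite (_ : n.+2 + n = 2 * n.+1); last lia.
apply/negP => pr_2n; have := @prime_nt_dvdP 2 _ pr_2n isT.
by rewrite dvdn_mulr // => /(_ isT); lia.
Qed.

(* Induction from about a/2 to a; the primes in between are few by [count_primes_mid_bound]. *)
Lemma prime_pi_bound m a : 0 < m -> m * prime_pi a <= m * 2 ^ m.+1 + 3 * a.
Proof.
move=> m_gt0; elim/ltn_ind: a => a IHa.
have [a_small|a_big] := leqP a (2 ^ m.+1).
  apply: leq_trans (leq_addr _ _).
  by rewrite leq_mul2l (leq_trans (prime_pi_le a)) ?orbT.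
have exp_gt0 : 0 < 2 ^ m by rewrite expn_gt0.
have := expnS 2 m; set n := a.-1 %/ 2 => exp_eq.
have n_gt0 : 0 < n by rewrite /n; lia.
have le_2m : 2 ^ m <= n.+1 by rewrite /n; lia.
have pi_a : prime_pi a <= prime_pi n.+1 + count prime (iota n.+2 n).
  by rewrite -prime_pi_double //; apply: prime_pi_mono; rewrite /n; lia.
have := IHa n.+1 ltac:(rewrite /n; lia).
have := @count_primes_mid_bound n m n_gt0 le_2m.
have := leq_mul (leqnn m) pi_a; rewrite mulnDr /n; lia.
Qed.

(** * Residues coprime to 210 *)

Lemma coprime210_prime p : prime p -> 7 < p -> coprime p 210.
Proof.
move=> p_pr p_gt7; rewrite prime_coprime // (_ : 210 = 2 * (3 * (5 * 7))) //.
rewrite !Euclid_dvdM //.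
by apply/negP => /or4P[] /dvdn_leq; lia.
Qed.

Definition count_coprime210 r x := count (fun j => coprime (1 + j * r) 210) (iota 1 x).

Lemma count_coprime210S r x :
  count_coprime210 r x.+1 = count_coprime210 r x + coprime (1 + x.+1 * r) 210.
Proof. by rewrite /count_coprime210 -{1}[x.+1]addn1 iotaD count_cat /= addn0 add1n. Qed.

Lemma count_coprime210_mod r x : count_coprime210 (r %% 210) x = count_coprime210 r x.
Proof.
apply: eq_count => j /=; rewrite -coprime_modl -[in RHS]coprime_modl.
by rewrite -modnDmr modnMmr modnDmr.
Qed.

(* [coprime210_scan r s c u n] walks j = u + 1, ..., u + n keeping s = 1 + j r
   (mod 210) and the running count c, checks c <= 1 + j/4 at each step, and
   checks c = 48 at the end. *)
Fixpoint coprime210_scan (r s c u n : nat) : bool :=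
  if n is n'.+1 then
    let s' := (s + r) %% 210 in let c' := c + coprime s' 210 in
    (c' <= 1 + u.+1 %/ 4) && coprime210_scan r s' c' u.+1 n'
  else c == 48.

Lemma coprime210_scanP r n s c u :
  coprime210_scan r s c u n -> s = (1 + u * r) %% 210 -> c = count_coprime210 r u ->
  {in [pred v | u < v <= u + n], forall v, count_coprime210 r v <= 1 + v %/ 4} /\
  count_coprime210 r (u + n) = 48.
Proof.
elim: n s c u => [|n IHn] s c u /=.
  by move=> /eqP -> _ ->; split => [v|]; rewrite ?addn0 // inE; lia.
move=> /andP[c_le scan_rest] s_eq c_eq.
have s_eq' : (s + r) %% 210 = (1 + u.+1 * r) %% 210.
  by rewrite s_eq modnDml mulSn; congr (_ %% _); lia.
have c_eq' : c + coprime ((s + r) %% 210) 210 = count_coprime210 r u.+1.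
  by rewrite s_eq' coprime_modl count_coprime210S c_eq.
have [IH_le IH_eq] := IHn _ _ _ scan_rest s_eq' c_eq'.
split; last by rewrite addnS.
move=> v; rewrite inE => /andP[lt_uv le_v]; case: (eqVneq v u.+1) => [->|ne_v].
  by rewrite -c_eq'.
by apply: IH_le; rewrite inE addSnnS le_v andbT ltn_neqAle eq_sym ne_v.
Qed.

Lemma coprime210_certificate :
  all (fun r => ~~ coprime r 210 || coprime210_scan r 1 0 0 210) (iota 0 210).
Proof. by vm_compute. Qed.

Lemma count_coprime210_period r : coprime r 210 ->
  {in [pred v | v <= 210], forall v, count_coprime210 r v <= 1 + v %/ 4} /\
  count_coprime210 r 210 = 48.
Proof.
rewrite -coprime_modl -count_coprime210_mod => r_coprime.
have r_lt : r %% 210 < 210 by rewrite ltn_mod.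
have := allP coprime210_certificate (r %% 210); rewrite mem_iota r_lt r_coprime.
rewrite [~~ true]/= orFb => /(_ isT) /coprime210_scanP /(_ erefl erefl) [le_v eq_48].
split => // -[|v] le_v' //.
by rewrite -count_coprime210_mod; apply: le_v; rewrite inE.
Qed.

Lemma count_coprime210D r t u : count_coprime210 r 210 = 48 ->
  count_coprime210 r (210 * t + u) = 48 * t + count_coprime210 r u.
Proof.
move=> r_48.
have shift s v :
    count_coprime210 r (210 * s + v) = count_coprime210 r (210 * s) + count_coprime210 r v.
  rewrite {1}/count_coprime210 iotaD count_cat [1 + _]addnC iotaDl count_map.
  congr (_ + _); apply: eq_count => j /=; rewrite -coprime_modl -[in RHS]coprime_modl.
  by rewrite (_ : 1 + (210 * s + j) * r = s * r * 210 + (1 + j * r)) ?modnMDl //; lia.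
rewrite shift; congr (_ + _); elim: t => [|t IHt] //.
by rewrite mulnS addnC shift IHt r_48; lia.
Qed.

(* A period of 210 values of j contributes 48, four less than 210/4. *)
Lemma count_coprime210_bound r x : coprime r 210 ->
  count_coprime210 r x + 4 * (x %/ 210) <= (0 < x) + x %/ 4.
Proof.
move=> /count_coprime210_period [le_v r_48].
case: x => [|x] //; set t := x.+1 %/ 210; set u := x.+1 %% 210.
have x_eq : x.+1 = 210 * t + u by rewrite /t /u mulnC -divn_eq.
have u_lt : u < 210 by rewrite ltn_mod.
have := le_v u (ltnW u_lt); rewrite ltn0Sn x_eq count_coprime210D //; lia.
Qed.

(** * Primes congruent to 1 modulo q^k *)

Definition count_primes_1mod m a := count (fun p => prime p && (m %| p.-1)) (iota 0 a.+1).

Lemma count_primes_1mod_le m a (P : pred nat) : 0 < m ->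
  (forall p, prime p -> m %| p.-1 -> 0 < p.-1 -> P p) ->
  count_primes_1mod m a <= count (fun j => P (1 + j * m)) (iota 1 (a.-1 %/ m)).
Proof.
move=> m_gt0 P_primes; rewrite /count_primes_1mod.
have -> : count (fun j => P (1 + j * m)) (iota 1 (a.-1 %/ m)) =
          count P (map (fun j => 1 + j * m) (iota 1 (a.-1 %/ m))) by rewrite count_map.
rewrite -!size_filter.
apply: uniq_leq_size; first by rewrite filter_uniq // iota_uniq.
move=> p; rewrite !mem_filter mem_iota ltnS => /andP[/andP[p_pr m_dvd] /andP[_ le_pa]].
have p_gt1 := prime_gt1 p_pr.
rewrite P_primes //; last lia.
apply/mapP; exists (p.-1 %/ m); last by rewrite divnK //; lia.
have le_m : m <= p.-1 by apply: dvdn_leq => //; lia.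
by rewrite mem_iota divn_gt0 // le_m add1n ltnS leq_div2r //; lia.
Qed.

Lemma count_primes_1mod_le_div m a : 0 < m -> count_primes_1mod m a <= a.-1 %/ m.
Proof.
move=> m_gt0; apply: leq_trans (@count_primes_1mod_le m a predT m_gt0 _) _ => //.
by rewrite count_predT size_iota.
Qed.

Lemma count_primes_1mod_le_pi m a : count_primes_1mod m a <= prime_pi a.
Proof. by apply: sub_count => p /andP[]. Qed.

Lemma sum_logn_pred_primes_le q a : prime q ->
  sum_logn_pred_primes q a <= \sum_(k <- iota 1 a) count_primes_1mod (q ^ k) a.
Proof.
move=> q_pr; rewrite /sum_logn_pred_primes.
apply: (@leq_trans
  (\sum_(p <- iota 0 a.+1 | prime p) \sum_(k <- iota 1 a) (q ^ k %| p.-1 : nat))).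
  rewrite big_seq_cond [X in _ <= X]big_seq_cond; apply: leq_sum => p /andP[].
  rewrite mem_iota ltnS => /andP[_ le_pa] _.
  rewrite logn_count_dvd // /index_iota (_ : a = p.-1 - 1 + (a - (p.-1 - 1))); last lia.
  by rewrite iotaD big_cat leq_addr.
by rewrite exchange_big; apply: leq_sum => k _; rewrite sum_nat_bool_count.
Qed.

Lemma sum_count_primes_1mod_small q a : prime q -> q <= 7 -> 2 ^ 21 * 2 ^ 801 <= a ->
  \sum_(k <- iota 1 a) count_primes_1mod (q ^ k) a <= 1 + (a %/ 4) %/ q.
Proof.
move=> q_pr le_q7 a_big.
have q_cases : q \in [:: 2; 3; 5; 7] by case: q q_pr le_q7 => [|[|[|[|[|[|[|[|q]]]]]]]].
have exp_gt0 : 0 < 2 ^ 801 by rewrite expn_gt0.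
have pi_bound := @prime_pi_bound 800 a isT.
rewrite (_ : iota 1 a = iota 1 5 ++ iota 6 (a - 5)); last first.
  by rewrite -[6]/(1 + 5) -iotaD; congr iota; lia.
rewrite big_cat.
have head_le : \sum_(k <- iota 1 5) count_primes_1mod (q ^ k) a <= 5 * prime_pi a.
  apply: (@leq_trans (\sum_(k <- iota 1 5) prime_pi a)).
    by apply: leq_sum => k _; apply: count_primes_1mod_le_pi.
  by rewrite big_const_seq /=; lia.
have tail_le : \sum_(k <- iota 6 (a - 5)) count_primes_1mod (q ^ k) a <= a.-1 %/ q ^ 5.
  apply: leq_trans (sum_div_expn_le _ _ _ 5 (prime_gt1 q_pr)).
  by apply: leq_sum => k _; rewrite count_primes_1mod_le_div // expn_gt0 prime_gt0.
suff arith : 5 * prime_pi a + a.-1 %/ q ^ 5 <= 1 + (a %/ 4) %/ q.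
  exact: leq_trans (leq_add head_le tail_le) arith.
by move: q_cases; rewrite !inE => /or4P[] /eqP ->; clear -pi_bound a_big exp_gt0; lia.
Qed.

Lemma sqrS_le_exp2 X : 1050 <= X -> X.+1 ^ 2 <= 2 ^ (1 + 4 * (X %/ 210)).
Proof.
move=> X_big; set t := X %/ 210.
have t_ge5 : 5 <= t by rewrite /t; lia.
have le_X : X.+1 <= 210 * t.+1 by rewrite /t; lia.
apply: leq_trans (_ : (210 * t.+1) ^ 2 <= _); first by rewrite leq_exp2r.
rewrite (_ : t = 5 + (t - 5)); last lia.
elim: (t - 5) => [|u IHu]; first by rewrite addn0; lia.
have -> : 2 ^ (1 + 4 * (5 + u.+1)) = 16 * 2 ^ (1 + 4 * (5 + u)).
  by rewrite addnS mulnS addnCA expnD.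
move: IHu; set w := 2 ^ _; nia.
Qed.

Lemma count_pos_div_expn q n a : 1 < q -> 1050 * 1050 <= n ->
  count (fun k => 0 < n %/ q ^ k) (iota 1 a) <= 1 + 4 * (n %/ q %/ 210).
Proof.
move=> q_gt1 n_big; have q_gt0 := ltnW q_gt1; set X := n %/ q.
rewrite -size_filter -[X in _ <= X](size_iota 1).
apply: uniq_leq_size; first by rewrite filter_uniq // iota_uniq.
move=> k; rewrite mem_filter !mem_iota divn_gt0 ?expn_gt0 ?q_gt0 //.
move=> /andP[le_qk /andP[k_gt0 _]]; rewrite k_gt0 /=.
have [->|k_gt1] := eqVneq k 1; first by rewrite ltnS leq_addr.
have le_q2 : q * q <= n.
  by apply: leq_trans le_qk; rewrite -[q * q]/(q ^ 2); apply: leq_pexp2l => //; lia.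
have le_qX : q <= X by rewrite leq_divRL.
have lt_nX : n < X.+1 ^ 2.
  rewrite -[_ ^ 2]/(X.+1 * X.+1); apply: leq_trans (ltn_ceil n q_gt0) _.
  by rewrite leq_mul2l (leq_trans le_qX) ?orbT.
have X_big : 1050 <= X.
  rewrite leqNgt; apply/negP => le_X.
  by have := leq_mul le_X le_X; rewrite -[X.+1 * _]/(X.+1 ^ 2); lia.
have : 2 ^ k < 2 ^ (1 + 4 * (X %/ 210)).
  apply: leq_ltn_trans (_ : 2 ^ k <= q ^ k) _; first by rewrite leq_exp2r; lia.
  exact: leq_ltn_trans le_qk (leq_trans lt_nX (sqrS_le_exp2 _ X_big)).
by rewrite ltn_exp2l //; lia.
Qed.

Lemma sum_count_primes_1mod_large q a : prime q -> 7 < q -> 1050 * 1050 < a ->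
  \sum_(k <- iota 1 a) count_primes_1mod (q ^ k) a <=
  1 + \sum_(k <- iota 1 a) (a %/ 4) %/ q ^ k.
Proof.
move=> q_pr q_gt7 a_big; have q_gt0 := prime_gt0 q_pr.
have per_k k : 0 < k -> count_primes_1mod (q ^ k) a + 4 * (a.-1 %/ q ^ k %/ 210) <=
    (0 < a.-1 %/ q ^ k) + (a %/ 4) %/ q ^ k.
  move=> k_gt0; have le_q : q <= q ^ k by rewrite -{1}(expn1 q) leq_pexp2l.
  have le_coprime : count_primes_1mod (q ^ k) a <= count_coprime210 (q ^ k) (a.-1 %/ q ^ k).
    apply: (count_primes_1mod_le _ _ (fun p => coprime p 210)).
      by rewrite expn_gt0 q_gt0.
    move=> p p_pr dvd_p p1_gt0; apply: coprime210_prime => //.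
    by have := dvdn_leq p1_gt0 dvd_p; lia.
  have q_coprime := coprime210_prime _ q_pr q_gt7.
  have := count_coprime210_bound _ (a.-1 %/ q ^ k) (coprimeXl k q_coprime).
  have : a.-1 %/ q ^ k %/ 4 <= a %/ 4 %/ q ^ k.
    by rewrite -!divnMA mulnC leq_div2r // leq_pred.
  lia.
have sum_le : \sum_(k <- iota 1 a) count_primes_1mod (q ^ k) a +
    \sum_(k <- iota 1 a) 4 * (a.-1 %/ q ^ k %/ 210) <=
    \sum_(k <- iota 1 a) (0 < a.-1 %/ q ^ k : nat) + \sum_(k <- iota 1 a) (a %/ 4) %/ q ^ k.
  rewrite -!big_split big_seq [X in _ <= X]big_seq /=; apply: leq_sum => k.
  by rewrite mem_iota => /andP[k_gt0 _]; apply: per_k.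
have := count_pos_div_expn _ _ a (prime_gt1 q_pr) (ltac:(lia) : 1050 * 1050 <= a.-1).
have := leq_sum_iota1 (fun k => 4 * (a.-1 %/ q ^ k %/ 210)) a (ltac:(lia) : 0 < a).
rewrite sum_nat_bool_count /= expn1 in sum_le *; lia.
Qed.

Lemma sum_logn_pred_primes_bound q a : prime q -> 2 ^ 21 * 2 ^ 801 <= a ->
  sum_logn_pred_primes q a <= logn q (a %/ 4)`! + 1.
Proof.
move=> q_pr a_big; have exp_gt0 : 0 < 2 ^ 801 by rewrite expn_gt0.
apply: leq_trans (sum_logn_pred_primes_le _ _ q_pr) _.
rewrite addnC (logn_fact_iota _ _ a q_pr) ?leq_div //.
have [le_q7|gt_q7] := leqP q 7.
  apply: leq_trans (sum_count_primes_1mod_small _ _ q_pr le_q7 a_big) _.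
  by rewrite leq_add2l (leq_sum_iota1 (fun k => a %/ 4 %/ q ^ k)) //; lia.
by apply: sum_count_primes_1mod_large q_pr gt_q7 _; lia.
Qed.

(* With L = (a + b)/8 >= a/4, a! b! L! divides c!, and the extra summand of
   [sum_logn_pred_primes_bound] is absorbed by the two [- 1]'s of
   [logn_totient_fact] when q <= a. *)
Lemma logn_totient_fact_add q a b : prime q -> a <= b -> 2 ^ 21 * 2 ^ 801 <= a ->
  logn q (totient a`!) + logn q (totient b`!) <=
  logn q (totient (a + b + (a + b) %/ 8)`!).
Proof.
move=> q_pr le_ab a_big; set L := (a + b) %/ 8; set c := a + b + L.
rewrite !logn_totient_fact //.
have le_bc : b <= c by rewrite /c; lia.
have le_logn_fact m n : m <= n -> logn q m`! <= logn q n`!.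
  by move=> le_mn; apply: dvdn_leq_log; rewrite ?fact_gt0 ?fact_dvdn_fact.
have fact_abL : logn q a`! + logn q b`! + logn q L`! <= logn q c`!.
  rewrite -!lognM ?muln_gt0 ?fact_gt0 //; apply: dvdn_leq_log; first exact: fact_gt0.
  exact: dvdn_trans (dvdn_mul (fact_mul_dvdn_fact a b) (dvdnn _)) (fact_mul_dvdn_fact _ L).
have le_pred_b := sum_logn_pred_primes_mono q _ _ le_bc.
have le_pred_a := sum_logn_pred_primes_bound _ _ q_pr a_big.
have le_fact_L : logn q (a %/ 4)`! <= logn q L`! by apply: le_logn_fact; rewrite /L; lia.
have logn_fact_gt0 n : q <= n -> 0 < logn q n`!.
  by move=> le_qn; rewrite logn_gt0 mem_primes q_pr fact_gt0 prime_dvd_fact.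
have [le_qa|lt_aq] := leqP q a.
  have le_qb := leq_trans le_qa le_ab; have le_qc := leq_trans le_qb le_bc.
  have := logn_fact_gt0 _ le_qa; have := logn_fact_gt0 _ le_qb.
  by rewrite le_qb le_qc; lia.
rewrite sum_logn_pred_primes_small //.
case: ifP => [le_qb|_]; last lia.
have := le_logn_fact _ _ le_bc; rewrite (leq_trans le_qb le_bc); lia.
Qed.

Theorem theorem1p3 :
  exists N : nat, forall a b : nat, 0 < a -> 0 < b -> N <= a -> N <= b ->
    (totient a`! * totient b`!) %| totient (a + b + (a + b) %/ 8)`!.
Proof.
exists (2 ^ 21 * 2 ^ 801) => a b _ _ a_big b_big.
wlog le_ab : a b a_big b_big / a <= b.
  move=> sym; have [le_ab|/ltnW le_ba] := leqP a b; first exact: sym.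
  by rewrite mulnC [a + b]addnC; apply: sym.
apply: dvdn_logn; rewrite ?muln_gt0 ?totient_gt0 ?fact_gt0 // => q q_pr.
by rewrite lognM ?totient_gt0 ?fact_gt0 // logn_totient_fact_add.
Qed.
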